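(* Let $G_H$ be a finite undirected multigraph (parallel edges allowed, no self-loops) with vertex set $V$, whose edge set is partitioned as $E = S \sqcup S^c$ into secure edges $S$ and insecure edges $S^c$, and let $0 < p_J^{S^c} \le p_J^{S} \le p_I$ be real costs. Assign weight $p_J^{S}$ to every secure edge and weight $p_J^{S^c}$ to every insecure edge, and let $C^*$ be a cut of minimum total weight among all cuts of $G_H$ containing at least one insecure edge. Then the attack $(C^*, J, I)$ with $I=\{e\}$ for some insecure edge $e\in C^*$ and $J = C^*\setminus\{e\}$ is an optimal (minimum-cost) hidden generalized attack.
   Context: For a nonempty proper subset $U \subsetneq V$, the cut $\delta(U)$ is the set of edges with exactly one endpoint in $U$; a cut of $G_H$ is any set of this form. ($G_H$ models a power grid's measurement graph: vertices are buses plus a reference bus, edges are measurements.) The costs are: $p_J^{S^c}$ per jammed insecure edge, $p_J^S$ per jammed secure edge, $p_I$ per insecure edge with injected data. A generalized attack is a triple $(C,J,I)$ where $C$ is a cut, $J \subseteq C$ is the set of jammed edges, and $I \subseteq (C \cap S^c)\setminus J$ is a nonempty set of injected edges; its cost is $p_J^{S}|J\cap S| + p_J^{S^c}|J \cap S^c| + p_I |I|$. The attack is hidden if $I \cup J = C$. An optimal hidden generalized attack is a hidden generalized attack of minimum cost among all hidden generalized attacks. *)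

From HB Require Import structures.
From mathcomp Require Import all_boot all_order all_algebra.
Set Implicit Arguments. Unset Strict Implicit. Unset Printing Implicit Defensive.
Import Order.TTheory GRing.Theory Num.Theory.
Local Open Scope ring_scope.

(* A finite multigraph: vertices V, edges E (a finType, so parallel edges are
   allowed), each edge e has endpoints (ends e).1 and (ends e).2. *)
Definition loopless (V E : finType) (ends : E -> V * V) : Prop :=
  forall e : E, (ends e).1 != (ends e).2.

Definition delta (V E : finType) (ends : E -> V * V) (U : {set V}) : {set E} :=
  [set e | ((ends e).1 \in U) != ((ends e).2 \in U)].

Definition is_cut (V E : finType) (ends : E -> V * V) (C : {set E}) : Prop :=
  exists U : {set V}, [/\ U != set0, U != setT & C = delta ends U].

Definition cut_weight (E : finType) (R : numDomainType) (S : {set E})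
    (pJS pJSc : R) (C : {set E}) : R :=
  \sum_(e in C) (if e \in S then pJS else pJSc).

Definition gen_attack (V E : finType) (ends : E -> V * V) (S : {set E})
    (C J I : {set E}) : Prop :=
  [/\ is_cut ends C, J \subset C, I \subset (C :&: ~: S) :\: J & I != set0].

Definition hidden_gen_attack (V E : finType) (ends : E -> V * V) (S : {set E})
    (C J I : {set E}) : Prop :=
  gen_attack ends S C J I /\ I :|: J = C.

Definition attack_cost (E : finType) (R : numDomainType) (S : {set E})
    (pJS pJSc pI : R) (J I : {set E}) : R :=
  pJS *+ #|J :&: S| + pJSc *+ #|J :&: ~: S| + pI *+ #|I|.

From HB Require Import structures.
From mathcomp Require Import all_boot all_order all_algebra.
From mathcomp Require Import ring.
Import Order.TTheory GRing.Theory Num.Theory.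
Local Open Scope ring_scope.

(* A hidden attack jams every edge of its cut except the injected ones, which
   are insecure; so its cost is the weight of its cut plus [pI - pJSc] per
   injected edge.  The cut of any hidden attack contains
   an insecure (injected) edge, so its weight is at least that of [Cstar], and
   at least one edge is injected; the attack [(Cstar, Cstar :\ e, [set e])]
   attains both bounds. *)

Section HiddenAttack.

Context {V E : finType} {ends : E -> V * V} {S : {set E}}.

Lemma cut_weightE {R : numDomainType} (pJS pJSc : R) (C : {set E}) :
  cut_weight S pJS pJSc C = pJS *+ #|C :&: S| + pJSc *+ #|C :&: ~: S|.
Proof.
rewrite /cut_weight (big_setID S) /= -setDE.
rewrite (eq_bigr (fun _ => pJS)); last by move=> x; rewrite inE => /andP[_ ->].
rewrite [X in _ + X](eq_bigr (fun _ => pJSc)); last first.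
  by move=> x; rewrite inE => /andP[/negbTE ->].
by rewrite !sumr_const.
Qed.

Context {C J I : {set E}}.
Hypothesis hidden : hidden_gen_attack ends S C J I.

Let injected_edge x :
  x \in I -> [/\ x \in C, x \notin S & x \notin J].
Proof.
have [[_ _ sub_I _] _] := hidden.
by move=> /(subsetP sub_I); rewrite !inE => /andP[-> /andP[-> ->]].
Qed.

Lemma hidden_attack_secure : C :&: S = J :&: S.
Proof.
apply/setP => x; have [_ <-] := hidden; rewrite !inE.
case xI: (x \in I) => //=.
by have [_ /negbTE -> _] := injected_edge _ xI; rewrite !andbF.
Qed.

Lemma hidden_attack_insecure : C :&: ~: S = (J :&: ~: S) :|: I.
Proof.
apply/setP => x; have [_ <-] := hidden; rewrite !inE.
case xI: (x \in I) => /=; last by rewrite orbF.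
by have [_ -> _] := injected_edge _ xI; rewrite orbT.
Qed.

Lemma card_hidden_attack_insecure :
  #|C :&: ~: S| = (#|J :&: ~: S| + #|I|)%N.
Proof.
rewrite hidden_attack_insecure -cardsUI.
suff -> : J :&: ~: S :&: I = set0 by rewrite cards0 addn0.
apply/setP => x; rewrite !inE.
case xI: (x \in I); last by rewrite andbF.
by have [_ _ /negbTE ->] := injected_edge _ xI.
Qed.

Lemma hidden_attack_costE {R : numDomainType} (pJS pJSc pI : R) :
  attack_cost S pJS pJSc pI J I = cut_weight S pJS pJSc C + (pI - pJSc) *+ #|I|.
Proof.
rewrite cut_weightE /attack_cost hidden_attack_secure.
rewrite card_hidden_attack_insecure mulrnDr mulrnBl.
ring.
Qed.

Lemma hidden_attack_cut_insecure : C :&: ~: S != set0.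
Proof.
have [[_ _ _ /set0Pn[x xI]] _] := hidden.
by apply/set0Pn; exists x; rewrite hidden_attack_insecure inE xI orbT.
Qed.

End HiddenAttack.

Lemma hidden_attack_single_injection {V E : finType} {ends : E -> V * V}
    {S C : {set E}} {e : E} :
  is_cut ends C -> e \in C -> e \notin S ->
  hidden_gen_attack ends S C (C :\ e) [set e].
Proof.
move=> cutC eC eS; split; last first.
  by apply/setP => x; rewrite !inE; case: eqP => // ->.
split=> //.
- by apply/subsetP => x; rewrite !inE => /andP[].
- by apply/subsetP => x; rewrite !inE => /eqP ->; rewrite eqxx eC eS.
- by apply/set0Pn; exists e; rewrite inE.
Qed.

Theorem theorem4 (R : realFieldType) (V E : finType) (ends : E -> V * V)
    (S : {set E}) (pJS pJSc pI : R) :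
  loopless ends ->
  0 < pJSc -> pJSc <= pJS -> pJS <= pI ->
  forall Cstar : {set E},
    is_cut ends Cstar -> Cstar :&: ~: S != set0 ->
    (forall C : {set E}, is_cut ends C -> C :&: ~: S != set0 ->
       cut_weight S pJS pJSc Cstar <= cut_weight S pJS pJSc C) ->
  forall e : E, e \in Cstar -> e \notin S ->
    hidden_gen_attack ends S Cstar (Cstar :\ e) [set e] /\
    (forall C J I : {set E}, hidden_gen_attack ends S C J I ->
       attack_cost S pJS pJSc pI (Cstar :\ e) [set e]
         <= attack_cost S pJS pJSc pI J I).
Proof.
move=> _ _ pJSc_le_pJS pJS_le_pI Cstar cut_Cstar _ Cstar_min e eCstar eS.
have star_hidden := hidden_attack_single_injection cut_Cstar eCstar eS.
split=> // C J I hidden.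
rewrite (hidden_attack_costE star_hidden) (hidden_attack_costE hidden).
rewrite cards1; apply: lerD.
  have [[cutC _ _ _] _] := hidden.
  exact: Cstar_min cutC (hidden_attack_cut_insecure hidden).
apply: ler_wpMn2l; first by rewrite subr_ge0 (le_trans pJSc_le_pJS pJS_le_pI).
by have [[_ _ _ I_neq0] _] := hidden; rewrite card_gt0.
Qed.
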